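(* Let $(B,\lfloor\cdot,\cdot\rfloor)$ be an SSD space with quadratic form $q$ and let $f:B\to\mathbb{R}\cup\{+\infty\}$ be a $w(B,B)$-lower semicontinuous proper convex function with $G_f\neq\emptyset$. Then $G_f$ is $q$-representable.
   Context: An SSD space is a pair $(B,\lfloor\cdot,\cdot\rfloor)$ with $B$ a nonzero real vector space and $\lfloor\cdot,\cdot\rfloor$ a symmetric bilinear form; $q(b)=\frac12\lfloor b,b\rfloor$. $w(B,B)$ is the coarsest topology on $B$ making all maps $b\mapsto\lfloor b,c\rfloor$ continuous. $f^{@}(b)=\sup_{c\in B}\{\lfloor c,b\rfloor-f(c)\}$, $\mathcal{P}_q(g)=\{b: g(b)=q(b)\}$, $G_f=\{b\in B: f(b)+f^{@}(b)=\lfloor b,b\rfloor\}$. A nonempty $A\subset B$ is $q$-positive if $q(b-c)\ge0$ for all $b,c\in A$; a $q$-positive set $A$ is $q$-representable if there exists a $w(B,B)$-lsc proper convex $g:B\to\mathbb{R}\cup\{+\infty\}$ with $g\ge q$ on $B$ and $\mathcal{P}_q(g)=A$. *)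

From HB Require Import structures.
From mathcomp Require Import all_boot all_order all_algebra.
From mathcomp Require Import all_classical all_reals all_analysis.
Set Implicit Arguments. Unset Strict Implicit. Unset Printing Implicit Defensive.
Import Order.TTheory GRing.Theory Num.Theory.
Local Open Scope classical_set_scope.
Local Open Scope ring_scope.

Import numFieldNormedType.Exports.
Section SSD.
Context {R : realType} {B : lmodType R}.
Variable bf : B -> B -> R.

Definition SSD_space : Prop :=
  [/\ exists b : B, b != 0,
      (forall b c : B, bf b c = bf c b) &
      (forall (t : R) (a b c : B), bf (t *: a + b) c = t * bf a c + bf b c)].

Definition qf (b : B) : R := bf b b / 2.

(* w(B,B): the coarsest topology on B making every b |-> [b,c] continuous,
   i.e. the supremum of the initial topologies of the maps b |-> [b,c]. *)
Definition wBB : Type :=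
  sup_topology (fun c : B => Topological.on (initial_topology (fun b : B => bf b c))).

Local Open Scope ereal_scope.

Definition w_lsc (f : B -> \bar R) : Prop :=
  @lower_semicontinuous wBB R f.

(* f : B -> R \cup {+oo} (never -oo), not identically +oo *)
Definition proper_fun (f : B -> \bar R) : Prop :=
  (forall b, f b != -oo) /\ (exists b, f b != +oo).

Definition convex_fun (f : B -> \bar R) : Prop :=
  forall (x y : B) (t : R), (0 < t < 1)%R ->
    f (t *: x + (1 - t) *: y)%R <= (t%:E * f x + (1 - t)%R%:E * f y).

Definition fat (f : B -> \bar R) (b : B) : \bar R :=
  ereal_sup [set (bf c b)%:E - f c | c in [set: B]].

Definition Gf (f : B -> \bar R) : set B :=
  [set b | f b + fat f b = (bf b b)%:E].

Definition Pq (g : B -> \bar R) : set B :=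
  [set b | g b = (qf b)%:E].

Definition q_positive (A : set B) : Prop :=
  A !=set0 /\ (forall b c, A b -> A c -> (0 <= qf (b - c))%R).

Definition q_representable (A : set B) : Prop :=
  q_positive A /\
  exists g : B -> \bar R,
    [/\ w_lsc g, proper_fun g, convex_fun g,
        (forall b, (qf b)%:E <= g b) & Pq g = A].

End SSD.

(* Proof idea: the representative is g = (f + f^@)/2.  By Fenchel-Young,
   f c + f^@ b >= [c,b]; with c = b this gives g >= q, with equality exactly on
   G_f, and adding the inequalities for (b,c) and (c,b) at points of G_f gives
   q (b - c) >= 0.  The conjugate f^@ is a supremum of affine functions that are
   w(B,B)-continuous, hence convex and w(B,B)-lsc, so g inherits convexity and
   lower semicontinuity from f; it is finite at any point of G_f. *)

From HB Require Import structures.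
From mathcomp Require Import all_boot all_order all_algebra.
From mathcomp Require Import all_classical all_reals all_analysis.
From mathcomp Require Import ring lra.
Set Implicit Arguments. Unset Strict Implicit. Unset Printing Implicit Defensive.
Import Order.TTheory GRing.Theory Num.Theory.
Local Open Scope classical_set_scope.
Local Open Scope ring_scope.
Import numFieldNormedType.Exports.

Local Open Scope ereal_scope.

Section extended_real.
Context {R : realType}.

Lemma lte_adde_split (a : R) (x y : \bar R) : x != -oo -> y != -oo ->
  a%:E < x + y -> exists a1 a2 : R, [/\ a1%:E < x, a2%:E < y & a = (a1 + a2)%R].
Proof.
case: x => [r| |] //; case: y => [s| |] // _ _.
- rewrite -EFinD lte_fin => h.
  by exists (r - (r + s - a) / 2)%R, (s - (r + s - a) / 2)%R; split; rewrite ?lte_fin; lra.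
- by move=> _; exists (r - 1)%R, (a - r + 1)%R; split; rewrite ?lte_fin ?ltry //; lra.
- by move=> _; exists (a - s + 1)%R, (s - 1)%R; split; rewrite ?lte_fin ?ltry //; lra.
- by move=> _; exists a, 0%R; split; rewrite ?ltry //; lra.
Qed.

Lemma adde_def_neqNy (x y : \bar R) : x != -oo -> y != -oo -> x +? y.
Proof. by move=> xNy yNy; apply: ltninfty_adde_def; rewrite inE ltNye. Qed.

End extended_real.

Section lsc.
Context {X : topologicalType} {R : realType}.
Implicit Types f g : X -> \bar R.

Lemma lower_semicontinuousD f g : (forall x, f x != -oo) -> (forall x, g x != -oo) ->
  lower_semicontinuous f -> lower_semicontinuous g ->
  lower_semicontinuous (fun x => f x + g x).
Proof.
move=> fNy gNy lscf lscg x a /(lte_adde_split (fNy x) (gNy x))[a1 [a2 [fa1 ga2 ->]]].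
have [U xU Ua1] := lscf x a1 fa1; have [V xV Va2] := lscg x a2 ga2.
by exists (U `&` V); [exact: filterI | move=> y [/Ua1 ? /Va2 ?]; rewrite EFinD lteD].
Qed.

Lemma lower_semicontinuousMr f (r : R) : (0 < r)%R ->
  lower_semicontinuous f -> lower_semicontinuous (fun x => f x * r%:E).
Proof.
move=> r0 lscf x a; rewrite -lte_pdivrMr // -EFinM => /lscf[V xV Vf].
by exists V => // y /Vf; rewrite EFinM lte_pdivrMr.
Qed.

End lsc.

Section convex.
Context {R : realType} {B : lmodType R}.
Implicit Types f g : B -> \bar R.

Lemma convex_funD f g : (forall x, f x != -oo) -> (forall x, g x != -oo) ->
  convex_fun f -> convex_fun g -> convex_fun (fun x => f x + g x).
Proof.
move=> fNy gNy cf cg x y t t01.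
rewrite muleDr ?adde_def_neqNy // muleDr ?adde_def_neqNy // addeACA.
exact: leeD (cf x y t t01) (cg x y t t01).
Qed.

Lemma convex_funMr f (r : R) : (0 <= r)%R -> (forall x, f x != -oo) ->
  convex_fun f -> convex_fun (fun x => f x * r%:E).
Proof.
move=> r0 fNy cf x y t /[dup] t01 /andP[t0 t1].
have scale_neqNy (s : R) u : (0 < s)%R -> u != -oo -> s%:E * u != -oo.
  by move=> s0; case: u => [?| |] //= _; rewrite gt0_muley ?lte_fin.
rewrite !muleA -muleDl ?adde_def_neqNy ?scale_neqNy ?subr_gt0 //.
by apply: lee_wpmul2r; rewrite ?lee_fin //; exact: cf.
Qed.
End convex.

Section fenchel_conjugate.
Context {R : realType} {B : lmodType R}.
Variables (bf : B -> B -> R) (f : B -> \bar R).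
Hypothesis f_proper : proper_fun f.

Lemma fat_ge (b c : B) : (bf c b)%:E - f c <= fat bf f b.
Proof. by apply: ereal_sup_ubound; exists c. Qed.

Lemma fat_neqNy (b : B) : fat bf f b != -oo.
Proof.
have [fNy [c]] := f_proper.
by case: (f c) (fNy c) (fat_ge b c) => [r| |] // _ + _; case: (fat bf f b).
Qed.

Lemma fenchel_young (b c : B) : (bf c b)%:E <= f c + fat bf f b.
Proof.
case: (f c) (f_proper.1 c) (fat_ge b c) => [r| |] // _.
  by rewrite leeBlDl.
by rewrite addye ?leey ?fat_neqNy.
Qed.

End fenchel_conjugate.

Lemma bf_wBB_continuous (R : realType) (B : lmodType R) (bf : B -> B -> R) (c : B) :
  continuous (fun b : wBB bf => bf b c).
Proof.
move=> x U /(@initial_continuous B R (bf^~ c) x).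
have := (cvg_sup _ (x : wBB bf) (nbhs_filter (x : wBB bf))).1 cvg_refl c.
by apply.
Qed.

Section symmetric_bilinear.
Context {R : realType} {B : lmodType R}.
Variable bf : B -> B -> R.
Hypothesis bf_sym : forall b c, bf b c = bf c b.
Hypothesis bf_linear : forall t a b c, bf (t *: a + b) c = (t * bf a c + bf b c)%R.

Lemma bf0l (c : B) : bf 0 c = 0%R.
Proof. by have := bf_linear 1 0 0 c; rewrite scale1r !addr0 mul1r; lra. Qed.

Lemma bfZl (t : R) (a c : B) : bf (t *: a) c = (t * bf a c)%R.
Proof. by rewrite -[t *: a]addr0 bf_linear bf0l addr0. Qed.

Lemma bfBl (a b c : B) : bf (a - b) c = (bf a c - bf b c)%R.
Proof. by rewrite addrC -scaleN1r bf_linear mulN1r addrC. Qed.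

Lemma bf_combr (s t : R) (a b c : B) :
  bf c (s *: a + t *: b) = (s * bf c a + t * bf c b)%R.
Proof. by rewrite bf_sym bf_linear bfZl !(bf_sym c). Qed.

Lemma qfB (b c : B) : qf bf (b - c) = (qf bf b + qf bf c - bf b c)%R.
Proof. rewrite /qf !bfBl !(bf_sym _ (b - c)) !bfBl (bf_sym c b); lra. Qed.

Lemma fat_convex (f : B -> \bar R) : (forall b, f b != -oo) -> convex_fun (fat bf f).
Proof.
move=> fNy x y t /andP[t0 t1]; apply: ge_ereal_sup => _ [c _ <-].
case: (f c) (fNy c) (fat_ge bf f x c) (fat_ge bf f y c) => [r| |] // _ fx fy.
  have -> : (bf c (t *: x + (1 - t) *: y))%:E - r%:E =
      t%:E * ((bf c x)%:E - r%:E) + (1 - t)%:E * ((bf c y)%:E - r%:E).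
    by rewrite -!EFinB -!EFinM -EFinD bf_combr; congr EFin; ring.
  by apply: leeD; apply: lee_wpmul2l; rewrite // lee_fin ?subr_ge0 ltW.
by rewrite /= addeNy leNye.
Qed.

Lemma fat_w_lsc (f : B -> \bar R) : w_lsc bf (fat bf f).
Proof.
move=> x a /ereal_sup_gt[_ [c _ <-]].
case: (f c) (fat_ge bf f ^~ c) => [r| |] fat_ge_c; last first.
- by exists setT => [|y _]; [exact: filterT | apply: lt_le_trans (fat_ge_c y)].
- by rewrite /= addeNy.
rewrite -EFinB lte_fin => a_lt.
exists [set y | (a + r < bf y c)%R].
  have : nbhs (bf x c) [set s | (a + r < s)%R].
    by apply: open_nbhs_nbhs; split; [exact: open_gt | rewrite /= bf_sym; lra].
  exact: bf_wBB_continuous.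
move=> y /= ay; apply: lt_le_trans (fat_ge_c y).
by rewrite -EFinB lte_fin bf_sym; lra.
Qed.

End symmetric_bilinear.

Section fenchel_average.
Context {R : realType} {B : lmodType R}.
Variables (bf : B -> B -> R) (f : B -> \bar R).
Hypothesis bf_sym : forall b c, bf b c = bf c b.
Hypothesis bf_linear : forall t a b c, bf (t *: a + b) c = (t * bf a c + bf b c)%R.
Hypothesis f_proper : proper_fun f.

Definition fenchel_avg (b : B) : \bar R := (f b + fat bf f b) * (2^-1)%:E.

Lemma fenchel_sum_neqNy (b : B) : f b + fat bf f b != -oo.
Proof. by rewrite adde_eq_ninfty negb_or f_proper.1 fat_neqNy. Qed.

Lemma Gf_fin_num (b : B) : Gf bf f b -> f b \is a fin_num /\ fat bf f b \is a fin_num.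
Proof. by rewrite /Gf /= => Gb; apply/andP; rewrite -fin_numD Gb. Qed.

Lemma Gf_q_positive : Gf bf f !=set0 -> q_positive bf (Gf bf f).
Proof.
move=> G0; split => // b c Gb Gc.
have [/fineK fb /fineK Fb] := Gf_fin_num Gb.
have [/fineK fc /fineK Fc] := Gf_fin_num Gc.
have := fenchel_young bf f_proper b c; have := fenchel_young bf f_proper c b.
move: Gb Gc; rewrite /Gf /= -fb -Fb -fc -Fc -!EFinD !lee_fin => -[Gb] [Gc].
rewrite qfB // /qf (bf_sym c b); lra.
Qed.

Lemma fenchel_avg_ge_qf (b : B) : (qf bf b)%:E <= fenchel_avg b.
Proof.
rewrite /qf EFinM; apply: lee_wpmul2r; first by rewrite lee_fin.
exact: fenchel_young.
Qed.

Lemma Pq_fenchel_avg : Pq bf fenchel_avg = Gf bf f.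
Proof.
apply/seteqP; split => b; rewrite /Pq /Gf /fenchel_avg /qf /=;
  case: (f b + fat bf f b) (fenchel_sum_neqNy b) => [s| |] //= _;
  by rewrite ?gt0_mulye ?lte_fin // => -[E]; congr EFin; lra.
Qed.

Lemma fenchel_avg_neqNy (b : B) : fenchel_avg b != -oo.
Proof.
by rewrite /fenchel_avg; case: (_ + _) (fenchel_sum_neqNy b) => [s| |] //= _;
  rewrite gt0_mulye ?lte_fin.
Qed.

Lemma fenchel_avg_proper : Gf bf f !=set0 -> proper_fun fenchel_avg.
Proof.
move=> [b Gb]; split; first exact: fenchel_avg_neqNy.
by exists b; rewrite /fenchel_avg Gb -EFinM.
Qed.

Lemma fenchel_avg_w_lsc : w_lsc bf f -> w_lsc bf fenchel_avg.
Proof.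
move=> f_lsc; apply: lower_semicontinuousMr => //.
apply: lower_semicontinuousD => //; [exact: f_proper.1 | exact: fat_neqNy | exact: fat_w_lsc].
Qed.

Lemma fenchel_avg_convex : convex_fun f -> convex_fun fenchel_avg.
Proof.
move=> f_convex; apply: convex_funMr; [by [] | exact: fenchel_sum_neqNy |].
apply: convex_funD => //; [exact: f_proper.1 | exact: fat_neqNy | exact: fat_convex f_proper.1].
Qed.

End fenchel_average.

Theorem mainTheorem10 (R : realType) (B : lmodType R) (bf : B -> B -> R)
  (f : B -> \bar R) :
  SSD_space bf ->
  w_lsc bf f -> proper_fun f -> convex_fun f ->
  Gf bf f !=set0 ->
  q_representable bf (Gf bf f).
Proof.
move=> [_ bf_sym bf_linear] f_lsc f_proper f_convex G0.
split; first exact: Gf_q_positive.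
exists (fenchel_avg bf f); split.
- exact: fenchel_avg_w_lsc.
- exact: fenchel_avg_proper.
- exact: fenchel_avg_convex.
- exact: fenchel_avg_ge_qf.
- exact: Pq_fenchel_avg.
Qed.
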